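(* Let $N\ge 2$, $Z=\{1,\dots,N\}$, $p\in\mathbb R$, $K<N$, and let $Z$ be partitioned into consecutive blocks (clusters) $\tilde Z_1,\dots,\tilde Z_K$ with $N_k=|\tilde Z_k|$. Let $W_0=(w^{(0)}_{ij})$ be symmetric with $w^{(0)}_{ij}\ge0$ if $i\ne j$ lie in the same cluster and $w^{(0)}_{ij}=0$ if $i=j$ or $i,j$ lie in different clusters, so $W_0=\mathrm{diag}(\tilde W_1,\dots,\tilde W_K)$. Let $\tilde D_k$ be the degree matrix of $\tilde W_k$, $\tilde L_k=\tilde D_k^{-p}(\tilde D_k-\tilde W_k)\tilde D_k^{-p}$, and assume there is $\theta>0$ such that $\langle\mathbf x,\tilde L_k\mathbf x\rangle\ge\theta\langle\mathbf x,\mathbf x\rangle$ for every $k$ and every $\mathbf x\in\mathbb R^{N_k}$ with $\mathbf x\perp\tilde D_k^p\mathbf 1_k$ ($\mathbf 1_k$ the vector of ones in $\mathbb R^{N_k}$). Let $D_0=\mathrm{diag}(d^{(0)}_i)$ be the degree matrix of $W_0$, $L_0=D_0^{-p}(D_0-W_0)D_0^{-p}$ and, for $\tau^2,\alpha>0$, $C_{\tau,0}=\tau^{2\alpha}(L_0+\tau^2I)^{-\alpha}$, with $j$-th column $\mathbf c_{j,0}$. Define $(\pmb\chi_k)_j=(d^{(0)}_j)^p$ if $j\in\tilde Z_k$ and $0$ otherwise, and $\bar{\pmb\chi}_k=\pmb\chi_k/\|\pmb\chi_k\|$. Then, as $\tau\downarrow0$, $$\big\|\mathbf c_{j,0}-(\bar{\pmb\chi}_k)_j\bar{\pmb\chi}_k\big\|^2\le\Xi\,\tau^{4\alpha}\qquad\forall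 j\in\tilde Z_k,$$ where $\Xi>0$ is a uniform constant.
   Context: The degrees of $W_0$ are positive (guaranteed by the spectral gap assumption, which excludes isolated nodes), so $D_0^{-p}$ is defined. Norms and inner products are Euclidean. *)

From HB Require Import structures.
From mathcomp Require Import all_boot all_order all_algebra.
From mathcomp Require Import boolp classical_sets reals exp.
Set Implicit Arguments. Unset Strict Implicit. Unset Printing Implicit Defensive.
Import Order.TTheory GRing.Theory Num.Theory.
Local Open Scope ring_scope.

Section Defs.
Variable R : realType.

Definition vdot n (x y : 'cV[R]_n) : R := \sum_i x i 0 * y i 0.
Definition vnorm2 n (x : 'cV[R]_n) : R := vdot x x.

Definition deg n (W : 'M[R]_n) (i : 'I_n) : R := \sum_j W i j.
Definition degmx n (W : 'M[R]_n) : 'M[R]_n := diag_mx (\row_i deg W i).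
Definition degpow n (W : 'M[R]_n) (s : R) : 'M[R]_n :=
  diag_mx (\row_i (deg W i) `^ s).

Definition lapl n (p : R) (W : 'M[R]_n) : 'M[R]_n :=
  degpow W (- p) *m (degmx W - W) *m degpow W (- p).

(* Spectral functional calculus for symmetric matrices:
   A = Q diag(l) Q^T with Q orthogonal, f(A) = Q diag(f l) Q^T
   (independent of the chosen decomposition). *)
Definition orth_diag n (A Q : 'M[R]_n) (l : 'rV[R]_n) :=
  Q^T *m Q = 1%:M /\ A = Q *m diag_mx l *m Q^T.

Definition mx_fun n (f : R -> R) (A : 'M[R]_n) : 'M[R]_n :=
  match pselect (exists Ql : 'M[R]_n * 'rV[R]_n, orth_diag A Ql.1 Ql.2) with
  | left H => let Ql := projT1 (cid H) in
              Ql.1 *m diag_mx (map_mx f Ql.2) *m Ql.1^T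
  | right _ => 0
  end.

Definition Ctau n (alpha tau : R) (L : 'M[R]_n) : 'M[R]_n :=
  (tau `^ (2 * alpha)) *: mx_fun (fun l => l `^ (- alpha)) (L + (tau ^+ 2)%:M).

(* Clusters given by a labelling cl : 'I_N -> 'I_K *)
Definition Nk N K (cl : 'I_N -> 'I_K) (k : 'I_K) : nat := #|[set i | cl i == k]|.
Definition blk N K (cl : 'I_N -> 'I_K) (k : 'I_K) (a : 'I_(Nk cl k)) : 'I_N :=
  @enum_val _ (mem [set i | cl i == k]) a.
Definition blockW N K (cl : 'I_N -> 'I_K) (W : 'M[R]_N) (k : 'I_K)
  : 'M[R]_(Nk cl k) := \matrix_(a, b) W (blk a) (blk b).

Definition chi N K (cl : 'I_N -> 'I_K) (W : 'M[R]_N) (p : R) (k : 'I_K) : 'cV[R]_N :=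
  \col_i (if cl i == k then (deg W i) `^ p else 0).
Definition chibar N K (cl : 'I_N -> 'I_K) (W : 'M[R]_N) (p : R) (k : 'I_K) : 'cV[R]_N :=
  (Num.sqrt (vnorm2 (chi cl W p k)))^-1 *: chi cl W p k.

End Defs.

From HB Require Import structures.
From mathcomp Require Import all_boot all_order all_algebra.
From mathcomp Require Import boolp classical_sets reals exp.
From mathcomp Require Import ring lra.
From mathcomp.real_closed Require Import complex.
Set Implicit Arguments. Unset Strict Implicit. Unset Printing Implicit Defensive.
Import Order.TTheory GRing.Theory Num.Theory.
Local Open Scope ring_scope.

(* The graph Laplacian L_0 is symmetric, annihilates the pairwise orthogonal
   vectors chi_k, and by the blockwise gap satisfies <y, L_0 y> >= theta |y|^2
   for y orthogonal to every chi_k.  Diagonalize L_0 + tau^2 I in an orthonormal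
   basis: an eigenvector either lies in ker L_0 (eigenvalue tau^2, on which
   C_tau acts as the identity) or is orthogonal to every chi_k with eigenvalue
   at least theta + tau^2 (on which C_tau has norm at most tau^(2 alpha)
   theta^(-alpha)).  Since C_tau fixes chibar_k, the error c_j - (chibar_k)_j
   chibar_k is C_tau applied to e_j - (chibar_k)_j chibar_k, a vector of norm at
   most 1 orthogonal to every chi_k; hence Xi = theta^(-2 alpha).  The real
   spectral theorem needed to evaluate C_tau is obtained from the Hermitian one
   by Householder deflation. *)

Section Householder.
Variable R : realFieldType.
Implicit Types n : nat.

Lemma trmx_mul_self_eq0 n (u : 'cV[R]_n) : (u^T *m u) 0 0 = 0 -> u = 0.
Proof.
rewrite mxE => /eqP; rewrite psumr_eq0 => [/allP uu0|i _]; last first.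
  by rewrite mxE; exact: sqr_ge0.
apply/matrixP => i j; rewrite ord1 mxE.
by have /implyP/(_ isT) := uu0 i (mem_index_enum i); rewrite mxE mulf_eq0 orbb => /eqP.
Qed.

Lemma trmx_mul_self_gt0 n (u : 'cV[R]_n) : u != 0 -> 0 < (u^T *m u) 0 0.
Proof.
move=> u0; rewrite lt_def; apply/andP; split.
  by apply: contra u0 => /eqP/trmx_mul_self_eq0 ->.
by rewrite mxE; apply: sumr_ge0 => i _; rewrite mxE; exact: sqr_ge0.
Qed.

Lemma householder n (v : 'cV[R]_n.+1) : v^T *m v = 1%:M ->
  exists H : 'M[R]_n.+1, [/\ H^T = H, H *m H = 1%:M & H *m delta_mx 0 0 = v].
Proof.
move=> vv1; set e : 'cV[R]_n.+1 := delta_mx 0 0; set u := v - e.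
set s := (u^T *m u) 0 0.
have ve : forall w : 'cV[R]_n.+1, w^T *m e = (w 0 0)%:M.
  by move=> w; rewrite /e -colE; apply/matrixP => i j; rewrite !ord1 !mxE.
have s_def : s = 2 - 2 * v 0 0.
  rewrite /s; have -> : u^T = v^T - e^T by rewrite /u linearB.
  rewrite /u mulmxBl !mulmxBr vv1 !ve -[e^T *m v]trmxK trmx_mul trmxK ve.
  by rewrite tr_scalar_mx !mxE /= mulr1n; lra.
have [s0|s_neq0] := eqVneq s 0.
  exists 1%:M; split; [exact: trmx1 | exact: mulmx1 |].
  by rewrite mul1mx; apply/esym/subr0_eq/trmx_mul_self_eq0.
set c := 2 / s; set X := u *m u^T.
have XX : X *m X = s *: X.
  by rewrite /X mulmxA -(mulmxA u) (mx11_scalar (u^T *m u)) mul_mx_scalar -scalemxAl.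
exists (1%:M - c *: X); split.
- by rewrite linearB /= trmx1 linearZ /= /X trmx_mul trmxK.
- rewrite mulmxBl mul1mx mulmxBr mulmx1 -scalemxAl -scalemxAr XX !scalerA.
  have -> : c * c * s = c + c by rewrite /c; field.
  by rewrite scalerDl opprB addrK subrK.
- rewrite mulmxBl mul1mx -scalemxAl /X -mulmxA ve mul_mx_scalar scalerA.
  have -> : c * u 0 0 = -1.
    have v00 : v 0 0 - 1 != 0 by apply: contra s_neq0 => /eqP v1; apply/eqP; rewrite s_def; lra.
    by rewrite /c s_def /u /e !mxE eqxx mulr1n; field; rewrite -s_def.
  by rewrite scaleN1r opprK /u addrC subrK.
Qed.

End Householder.

Section RealSpectral.
Variable R : rcfType.
Implicit Types n : nat.

Lemma symmx_eigenvector n (A : 'M[R]_n.+1) : A^T = A ->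
  exists (l : R) (v : 'cV[R]_n.+1), v != 0 /\ A *m v = l *: v.
Proof.
(* The complexification of A is Hermitian, so its spectral diagonal is real and
   row 0 of the unitary diagonalizer is an eigenvector for the real sp 0 0. *)
move=> Asym; pose f := real_complex R.
have herm : map_mx f A \is hermsymmx.
  apply: realsym_hermsym.
    by apply/is_hermitianmxP; rewrite expr0 scale1r map_mx_id // map_trmx Asym.
  by apply/mxOverP => i j; rewrite mxE; apply/complex_realP; exists (A i j).
have /orthomx_spectralP AE := hermitian_normalmx herm.
set P := spectralmx _ in AE; set sp := spectral_diag _ in AE.
have /complex_realP [l spl] := mxOverP (hermitian_spectral_diag_real herm) 0 0.
have : eigenvalue (map_mx f A) (f l).
  apply/eigenvalueP; exists (row 0 P); last first.
    apply: contraTneq isT => e0P.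
    have := mulmxK (spectral_unit (map_mx f A)) (delta_mx 0 0 : 'rV_n.+1).
    rewrite -/P -rowE e0P mul0mx => /rowP/(_ 0).
    by rewrite !mxE eqxx /= => /eqP; rewrite eq_sym oner_eq0.
  rewrite AE !mulmxA rowE -(mulmxA _ P) mulmxV ?spectral_unit // mulmx1 scalemxAl.
  congr (_ *m _); rewrite /f -spl; apply/rowP => j.
  by rewrite mul_mx_diag !mxE /=; case: eqP => [->|]; rewrite ?mulr0 ?mul0r ?mulr1 ?mul1r.
rewrite (eigenvalue_map (real_complex R)) => /eigenvalueP [v vA v0].
exists l, v^T; split; first by rewrite trmx_eq0.
by rewrite -[A]Asym -trmx_mul vA linearZ.
Qed.

Lemma symmx_unit_eigenvector n (A : 'M[R]_n.+1) : A^T = A ->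
  exists (l : R) (v : 'cV[R]_n.+1), v^T *m v = 1%:M /\ A *m v = l *: v.
Proof.
move=> /symmx_eigenvector [l [w [w0 Aw]]]; have w_gt0 := trmx_mul_self_gt0 w0.
exists l, ((Num.sqrt ((w^T *m w) 0 0))^-1 *: w); split; last first.
  by rewrite -scalemxAr Aw !scalerA mulrC.
set a := _^-1; have -> : (a *: w)^T = a *: w^T by rewrite linearZ.
rewrite -scalemxAr -scalemxAl scalerA -expr2.
rewrite /a exprVn sqr_sqrtr ?(ltW w_gt0) //.
by rewrite [X in _ *: X = _]mx11_scalar scale_scalar_mx mulVf ?gt_eqF.
Qed.

Lemma symmx_eigen_block n (B : 'M[R]_(1 + n)) (l : R) : B^T = B ->
  B *m (delta_mx 0 0 : 'cV_(1 + n)) = l *: delta_mx 0 0 -> B = block_mx l%:M 0 0 (drsubmx B).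
Proof.
move=> Bsym Be.
have B_0 i : B i 0 = l * (i == 0)%:R.
  by have /colP/(_ i) := Be; rewrite -colE !mxE eqxx andbT.
have l0 : lshift n (0 : 'I_1) = 0 by apply/val_inj.
rewrite -[LHS]submxK; congr block_mx; apply/matrixP => i j; rewrite !ord1 !mxE l0.
- by rewrite B_0 eqxx mulr1.
- by rewrite -[B]Bsym mxE B_0 mulr_natr.
- by rewrite B_0 mulr_natr.
Qed.

Theorem symmx_orth_diag n (A : 'M[R]_n) : A^T = A ->
  exists (Q : 'M[R]_n) (l : 'rV[R]_n), Q^T *m Q = 1%:M /\ A = Q *m diag_mx l *m Q^T.
Proof.
elim: n A => [|n IHn] A Asym.
  by exists 1%:M, 0; split; [rewrite trmx1 mulmx1 | rewrite (flatmx0 A) (flatmx0 (_ *m _ *m _))].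
have [l [v [vv1 Av]]] := symmx_unit_eigenvector Asym.
have [H [Hsym HH He]] := householder vv1.
have HAH_sym : (H *m A *m H)^T = H *m A *m H by rewrite !trmx_mul Hsym Asym mulmxA.
have HAH_e : H *m A *m H *m delta_mx 0 0 = l *: (delta_mx 0 0 : 'cV_n.+1).
  by rewrite -!mulmxA He Av -scalemxAr -He mulmxA HH mul1mx.
have HAH_blk := symmx_eigen_block HAH_sym HAH_e.
set B := drsubmx _ in HAH_blk.
have [|Q [l' [QQ BE]]] := IHn B; first by rewrite /B trmx_drsub HAH_sym.
exists (H *m (block_mx 1%:M 0 0 Q : 'M_(1 + n))), (row_mx l%:M l' : 'rV_(1 + n)); split.
  rewrite trmx_mul Hsym -mulmxA (mulmxA H) HH mul1mx (tr_block_mx (1%:M : 'M_1)).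
  rewrite !(trmx0, trmx1) (@mulmx_block _ 1 n 1 n 1 n) QQ.
  by rewrite !(mulmx0, mul0mx, addr0, add0r, mulmx1) -scalar_mx_block.
have -> : A = H *m (H *m A *m H) *m H by rewrite !mulmxA HH mul1mx -mulmxA HH mulmx1.
rewrite HAH_blk -/B BE trmx_mul Hsym (tr_block_mx (1%:M : 'M_1)) !trmx0 trmx1.
rewrite (diag_mx_row (l%:M : 'rV_1)) -!mulmxA; congr (_ *m _); rewrite !mulmxA; congr (_ *m _).
rewrite !(@mulmx_block _ 1 n 1 n 1 n) !(mulmx0, mul0mx, addr0, add0r, mulmx1, mul1mx).
suff -> : diag_mx (l%:M : 'rV_1) = l%:M by [].
by apply/matrixP => i j; rewrite !ord1 !mxE.
Qed.

End RealSpectral.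

Section EuclideanProduct.
Variable R : realType.
Implicit Types n : nat.

Lemma vdotE n (x y : 'cV[R]_n) : vdot x y = (x^T *m y) 0 0.
Proof. by rewrite mxE; apply: eq_bigr => i _; rewrite mxE. Qed.

Lemma vdotC n (x y : 'cV[R]_n) : vdot x y = vdot y x.
Proof. by apply: eq_bigr => i _; rewrite mulrC. Qed.

Lemma vdotZr n (x y : 'cV[R]_n) a : vdot x (a *: y) = a * vdot x y.
Proof. by rewrite /vdot mulr_sumr; apply: eq_bigr => i _; rewrite mxE mulrCA. Qed.

Lemma vdotBr n (x y z : 'cV[R]_n) : vdot x (y - z) = vdot x y - vdot x z.
Proof. by rewrite /vdot -sumrB; apply: eq_bigr => i _; rewrite !mxE mulrBr. Qed.

Lemma vdot_sumr n (I : finType) (x : 'cV[R]_n) (F : I -> 'cV[R]_n) :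
  vdot x (\sum_k F k) = \sum_k vdot x (F k).
Proof.
rewrite /vdot exchange_big; apply: eq_bigr => i _.
by rewrite summxE mulr_sumr.
Qed.

Lemma vdot0r n (x : 'cV[R]_n) : vdot x 0 = 0.
Proof. by rewrite -(scale0r 0) vdotZr mul0r. Qed.

Lemma vdot_ge0 n (x : 'cV[R]_n) : 0 <= vdot x x.
Proof. by apply: sumr_ge0 => i _; exact: sqr_ge0. Qed.

Lemma vdot_eq0 n (x : 'cV[R]_n) : vdot x x = 0 -> x = 0.
Proof. by rewrite vdotE; exact: trmx_mul_self_eq0. Qed.

Lemma vdot_mulmxr n (A : 'M[R]_n) (x y : 'cV[R]_n) : vdot x (A *m y) = vdot (A^T *m x) y.
Proof. by rewrite !vdotE trmx_mul trmxK mulmxA. Qed.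

Lemma vdot_col_trmx n (Q : 'M[R]_n) (x : 'cV[R]_n) i : (Q^T *m x) i 0 = vdot (col i Q) x.
Proof. by rewrite mxE; apply: eq_bigr => j _; rewrite !mxE. Qed.

Lemma vnorm2_gt0 n (x : 'cV[R]_n) : x != 0 -> 0 < vnorm2 x.
Proof. by move=> x0; rewrite lt_def vdot_ge0 andbT; apply: contra x0 => /eqP/vdot_eq0 ->. Qed.

Lemma vdot_deltal n j (x : 'cV[R]_n) : vdot (delta_mx j 0) x = x j 0.
Proof. by rewrite vdotE trmx_delta -rowE mxE. Qed.

Lemma vnorm2_normalize n (x : 'cV[R]_n) : x != 0 -> vnorm2 ((Num.sqrt (vnorm2 x))^-1 *: x) = 1.
Proof.
move=> x0; have x_gt0 := vnorm2_gt0 x0.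
rewrite /vnorm2 vdotZr vdotC vdotZr mulrA -expr2 exprVn sqr_sqrtr ?(ltW x_gt0) //.
by rewrite mulVf // gt_eqF.
Qed.

Definition delta_residual n (u : 'cV[R]_n) j : 'cV[R]_n := delta_mx j 0 - u j 0 *: u.

Lemma vdot_delta_residual n (u : 'cV[R]_n) j : vnorm2 u = 1 -> vdot (delta_residual u j) u = 0.
Proof. by move=> u1; rewrite vdotC vdotBr vdotZr -/(vnorm2 u) u1 mulr1 vdotC vdot_deltal subrr. Qed.

Lemma vnorm2_delta_residual n (u : 'cV[R]_n) j : vnorm2 u = 1 -> vnorm2 (delta_residual u j) <= 1.
Proof.
move=> u1; rewrite /vnorm2 {2}/delta_residual vdotBr vdotZr vdot_delta_residual // mulr0 subr0.
by rewrite vdotC vdot_deltal !mxE eqxx lerBlDr lerDl sqr_ge0.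
Qed.

End EuclideanProduct.

Section Powers.
Variable R : realType.
Implicit Types x y a : R.

Lemma powR_mul2 x a : 0 <= x -> x `^ (2 * a) = (x ^+ 2) `^ a.
Proof. by move=> x0; rewrite powRrM powR_mulrn. Qed.

Lemma powR_mul4 x a : 0 <= x -> x `^ (4 * a) = (x `^ (2 * a)) ^+ 2.
Proof.
move=> x0; rewrite -powR_mulrn ?powR_ge0 // -powRrM.
by have -> : 2 * a * 2%:R = 4 * a by ring.
Qed.

Lemma powR_sqrK x a : 0 < x -> x `^ (2 * a) * (x ^+ 2) `^ (- a) = 1.
Proof. by move=> x0; rewrite (powR_mul2 _ (ltW x0)) powRN mulfV // gt_eqF // powR_gt0 // exprn_gt0. Qed.

Lemma powRN_le x y a : 0 < x -> x <= y -> 0 <= a -> y `^ (- a) <= x `^ (- a).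
Proof.
move=> x0 xy a0; have y0 := lt_le_trans x0 xy.
by rewrite !powRN lef_pV2 ?posrE ?powR_gt0 // (ge0_ler_powR a0) ?nnegrE ?(ltW x0) ?(ltW y0).
Qed.

End Powers.

Section OrthogonalDiagonalization.
Variable R : realType.
Implicit Types n : nat.

Lemma mx_fun_sym n (f : R -> R) (A : 'M[R]_n) : A^T = A ->
  exists (Q : 'M[R]_n) (l : 'rV[R]_n),
    orth_diag A Q l /\ mx_fun f A = Q *m diag_mx (map_mx f l) *m Q^T.
Proof.
move=> Asym; rewrite /mx_fun; case: pselect => [ex|nex]; last first.
  have [Q [l QlA]] := symmx_orth_diag Asym.
  by case: nex; exists (Q, l).
by case: (cid ex) => -[Q l] /= QlA; exists Q, l.
Qed.

Lemma orth_diag_col n (A Q : 'M[R]_n) l i :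
  orth_diag A Q l -> A *m col i Q = l 0 i *: col i Q.
Proof.
move=> [QQ ->]; rewrite colE -!mulmxA (mulmxA Q^T) QQ mul1mx scalemxAr.
congr (_ *m _); apply/colP => j; rewrite mul_diag_mx !mxE.
by case: eqP => [->|]; rewrite ?mulr1 ?mulr0.
Qed.

Lemma orth_conj_diag_fix n (Q : 'M[R]_n) (d : 'rV[R]_n) (x : 'cV[R]_n) :
  Q^T *m Q = 1%:M -> (forall i, d 0 i = 1 \/ vdot (col i Q) x = 0) ->
  Q *m diag_mx d *m Q^T *m x = x.
Proof.
move=> QQ dx; rewrite -!mulmxA.
have -> : diag_mx d *m (Q^T *m x) = Q^T *m x.
  apply/colP => i; rewrite mul_diag_mx mxE vdot_col_trmx.
  by case: (dx i) => ->; rewrite ?mul1r ?mulr0.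
by rewrite mulmxA (mulmx1C QQ) mul1mx.
Qed.

Lemma vnorm2_orth_mulmx n (Q : 'M[R]_n) (y : 'cV[R]_n) :
  Q^T *m Q = 1%:M -> vnorm2 (Q *m y) = vnorm2 y.
Proof. by move=> QQ; rewrite /vnorm2 !vdotE trmx_mul -mulmxA (mulmxA Q^T) QQ mul1mx. Qed.

Lemma vnorm2_orth_conj_diag n (Q : 'M[R]_n) (d : 'rV[R]_n) (x : 'cV[R]_n) :
  Q^T *m Q = 1%:M ->
  vnorm2 (Q *m diag_mx d *m Q^T *m x) = \sum_i (d 0 i * vdot (col i Q) x) ^+ 2.
Proof.
move=> QQ; rewrite -!mulmxA vnorm2_orth_mulmx //; apply: eq_bigr => i _.
by rewrite mul_diag_mx mxE vdot_col_trmx expr2.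
Qed.

Lemma vnorm2_orth_coord n (Q : 'M[R]_n) (x : 'cV[R]_n) :
  Q^T *m Q = 1%:M -> vnorm2 x = \sum_i vdot (col i Q) x ^+ 2.
Proof.
move=> QQ; rewrite -[x in LHS]mul1mx -(mulmx1C QQ) -mulmxA vnorm2_orth_mulmx //.
by apply: eq_bigr => i _; rewrite vdot_col_trmx expr2.
Qed.

Lemma orth_col_neq0 n (Q : 'M[R]_n) i : Q^T *m Q = 1%:M -> col i Q != 0.
Proof.
move=> QQ; apply/eqP => Qi0.
have : Q^T *m Q *m delta_mx i 0 = 1%:M *m (delta_mx i 0 : 'cV_n) by rewrite QQ.
rewrite -mulmxA -colE Qi0 mulmx0 mul1mx => /colP/(_ i).
by rewrite !mxE eqxx => /eqP; rewrite eq_sym oner_eq0.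
Qed.

End OrthogonalDiagonalization.

Section KernelGap.
Variables (R : realType) (n K : nat) (L : 'M[R]_n) (chi : 'I_K -> 'cV[R]_n) (theta : R).
Implicit Types (v r : 'cV[R]_n) (mu a t : R).

Hypothesis L_sym : L^T = L.
Hypothesis L_chi : forall k, L *m chi k = 0.
Hypothesis chi_orth : forall k k', k != k' -> vdot (chi k) (chi k') = 0.
Hypothesis theta_gt0 : 0 < theta.
Hypothesis gap : forall y, (forall k, vdot y (chi k) = 0) -> theta * vdot y y <= vdot y (L *m y).

Lemma eigenvector_orth_chi v mu : L *m v = mu *: v -> mu != 0 ->
  forall k, vdot v (chi k) = 0.
Proof.
move=> Lv mu0 k.
have : mu * vdot (chi k) v = 0 by rewrite -vdotZr -Lv vdot_mulmxr L_sym L_chi vdotC vdot0r.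
by move/eqP; rewrite mulf_eq0 (negPf mu0) vdotC => /eqP.
Qed.

Lemma eigenvalue_ge_gap v mu : L *m v = mu *: v -> v != 0 -> mu != 0 -> theta <= mu.
Proof.
move=> Lv v0 mu0; have /gap := eigenvector_orth_chi Lv mu0.
by rewrite Lv vdotZr ler_pM2r // vnorm2_gt0.
Qed.

Lemma kernel_orth v r : L *m v = 0 -> (forall k, vdot r (chi k) = 0) -> vdot v r = 0.
Proof.
(* The component y of v orthogonal to the chi's is still in ker L, so the gap
   forces y = 0 and v is a combination of the chi's. *)
move=> Lv r_chi; pose c k := vdot v (chi k) / vdot (chi k) (chi k).
set y := v - \sum_k c k *: chi k.
have y_chi k : vdot y (chi k) = 0.
  rewrite vdotC vdotBr vdot_sumr (bigD1 k) //= big1 => [|k' k'k]; last first.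
    by rewrite vdotZr chi_orth ?mulr0 // eq_sym.
  rewrite addr0 vdotZr /c vdotC; have [chi0|chi_neq0] := eqVneq (vdot (chi k) (chi k)) 0.
    by rewrite (vdot_eq0 chi0) !vdot0r mulr0 subr0.
  by rewrite divfK // subrr.
have y0 : y = 0.
  apply: vdot_eq0; apply/le_anti; rewrite vdot_ge0 andbT.
  have := gap y_chi; rewrite mulmxBr Lv mulmx_sumr big1 ?subr0 ?vdot0r => [|k _]; last first.
    by rewrite -scalemxAr L_chi scaler0.
  by rewrite pmulr_rle0.
have -> : v = \sum_k c k *: chi k by apply/eqP; rewrite -subr_eq0 -/y y0.
by rewrite vdotC vdot_sumr big1 // => k _; rewrite vdotZr r_chi mulr0.
Qed.

Lemma Ctau_spectral a t : exists (Q : 'M[R]_n) (l : 'rV[R]_n),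
  orth_diag (L + (t ^+ 2)%:M) Q l /\
  Ctau a t L = Q *m diag_mx (\row_i (t `^ (2 * a) * l 0 i `^ (- a))) *m Q^T.
Proof.
have LtI_sym : (L + (t ^+ 2)%:M)^T = L + (t ^+ 2)%:M by rewrite linearD /= tr_scalar_mx L_sym.
have [Q [l [Ql fE]]] := mx_fun_sym (fun x => x `^ (- a)) LtI_sym.
exists Q, l; split => //; rewrite /Ctau fE scalemxAl scalemxAr -linearZ /=.
by congr (_ *m diag_mx _ *m _); apply/rowP => i; rewrite !mxE.
Qed.

Lemma shifted_eigen_cases t (Q : 'M[R]_n) l i : orth_diag (L + (t ^+ 2)%:M) Q l ->
  (l 0 i = t ^+ 2 /\ L *m col i Q = 0) \/
  (theta + t ^+ 2 <= l 0 i /\ forall k, vdot (col i Q) (chi k) = 0).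
Proof.
move=> Ql; have LQi : L *m col i Q = (l 0 i - t ^+ 2) *: col i Q.
  by rewrite scalerBl -(orth_diag_col i Ql) -mul_scalar_mx -mulmxBl addrK.
have [mu0|mu_neq0] := eqVneq (l 0 i - t ^+ 2) 0.
  by left; rewrite LQi mu0 scale0r; split => //; apply/eqP; rewrite -subr_eq0 mu0.
right; split; last exact: eigenvector_orth_chi LQi mu_neq0.
by rewrite -lerBrDr; apply: eigenvalue_ge_gap LQi (orth_col_neq0 _ Ql.1) mu_neq0.
Qed.

Lemma Ctau_mul_chi a t k : 0 < t -> Ctau a t L *m chi k = chi k.
Proof.
move=> t_gt0; have [Q [l [Ql ->]]] := Ctau_spectral a t.
apply: orth_conj_diag_fix Ql.1 _ => i; rewrite mxE.
case: (shifted_eigen_cases i Ql) => [[-> _]|[_ Qi_chi]]; last by right.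
by left; rewrite powR_sqrK.
Qed.

Lemma vnorm2_Ctau_orth a t r : 0 < t -> 0 < a -> (forall k, vdot r (chi k) = 0) ->
  vnorm2 (Ctau a t L *m r) <= (theta `^ (- a)) ^+ 2 * t `^ (4 * a) * vnorm2 r.
Proof.
move=> t_gt0 a_gt0 r_chi; have [Q [l [Ql ->]]] := Ctau_spectral a t.
rewrite vnorm2_orth_conj_diag ?Ql.1 // (vnorm2_orth_coord r Ql.1) mulr_sumr.
apply: ler_sum => i _; rewrite mxE.
case: (shifted_eigen_cases i Ql) => [[_ LQi]|[l_ge _]].
  by rewrite (kernel_orth LQi r_chi) mulr0 !expr0n /= mulr0.
have lX : l 0 i `^ (- a) <= theta `^ (- a).
  by apply: powRN_le (ltW a_gt0) => //; apply: le_trans l_ge; rewrite lerDl sqr_ge0.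
rewrite (powR_mul4 _ (ltW t_gt0)) !exprMn; apply: ler_wpM2r; first exact: sqr_ge0.
rewrite mulrC; apply: ler_wpM2r; first exact: sqr_ge0.
by rewrite ler_sqr ?nnegrE ?powR_ge0.
Qed.

End KernelGap.

Section GraphLaplacian.
Variables (R : realType) (p : R).

Lemma laplE n (W : 'M[R]_n) i j :
  lapl p W i j = deg W i `^ (- p) * ((i == j)%:R * deg W i - W i j) * deg W j `^ (- p).
Proof. by rewrite /lapl /degpow /degmx mul_mx_diag mxE mul_diag_mx !mxE mulr_natl. Qed.

Lemma lapl_sym n (W : 'M[R]_n) : W^T = W -> (lapl p W)^T = lapl p W.
Proof.
move=> Wsym; have Wji i j : W j i = W i j by rewrite -[in LHS]Wsym mxE.
apply/matrixP => i j; rewrite mxE !laplE Wji.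
have [->//|ij] := eqVneq i j.
by rewrite !mulr0n; ring.
Qed.

End GraphLaplacian.

Section Clusters.
Variables (R : realType) (N K : nat) (cl : 'I_N -> 'I_K) (W : 'M[R]_N) (p : R).
Hypothesis W_off : forall i j, cl i != cl j -> W i j = 0.

Lemma cl_blk k (a : 'I_(Nk cl k)) : cl (blk a) = k.
Proof. by have := enum_valP a; rewrite inE => /eqP. Qed.

Lemma blk_inj k : injective (@blk _ _ cl k).
Proof. exact: enum_val_inj. Qed.

Lemma big_cluster (F : 'I_N -> R) k :
  \sum_(i | cl i == k) F i = \sum_(a < Nk cl k) F (blk a).
Proof.
rewrite /Nk /blk -(big_enum_val (A := mem [set i | cl i == k])) /=.
by apply: eq_bigl => i; rewrite !inE.
Qed.

Lemma big_clusters (F : 'I_N -> R) :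
  \sum_i F i = \sum_k \sum_(a < Nk cl k) F (blk a).
Proof.
by rewrite (partition_big cl xpredT) //=; apply: eq_bigr => k _; rewrite big_cluster.
Qed.

Lemma big_cluster_support (F : 'I_N -> R) i :
  (forall j, cl i != cl j -> F j = 0) -> \sum_j F j = \sum_(b < Nk cl (cl i)) F (blk b).
Proof.
move=> F0; rewrite (bigID (fun j => cl j == cl i)) /= [X in _ + X]big1 ?addr0.
  exact: big_cluster.
by move=> j; rewrite eq_sym; exact: F0.
Qed.

Lemma deg_blockW k (a : 'I_(Nk cl k)) : deg (blockW cl W k) a = deg W (blk a).
Proof.
rewrite /deg (big_cluster_support (i := blk a)); last by move=> j; apply: W_off.
by rewrite cl_blk; apply: eq_bigr => b _; rewrite mxE.
Qed.

Lemma lapl_blockW k (a b : 'I_(Nk cl k)) : lapl p (blockW cl W k) a b = lapl p W (blk a) (blk b).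
Proof. by rewrite !laplE !deg_blockW mxE (inj_eq (@blk_inj k)). Qed.

Definition cluster_part k (y : 'cV[R]_N) : 'cV[R]_(Nk cl k) := \col_a y (blk a) 0.

Lemma vdot_clusters (x y : 'cV[R]_N) :
  vdot x y = \sum_k vdot (cluster_part k x) (cluster_part k y).
Proof.
rewrite /vdot big_clusters; apply: eq_bigr => k _.
by apply: eq_bigr => a _; rewrite !mxE.
Qed.

Lemma cluster_part_lapl k (y : 'cV[R]_N) :
  cluster_part k (lapl p W *m y) = lapl p (blockW cl W k) *m cluster_part k y.
Proof.
apply/colP => a; rewrite !mxE (big_cluster_support (i := blk a)).
  rewrite cl_blk; apply: eq_bigr => b _.
  by rewrite lapl_blockW; congr (_ * _); rewrite mxE.
move=> j clj; have aj : blk a != j by apply: contraNneq clj => ->.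
by rewrite laplE (negPf aj) W_off // mulr0n mul0r subrr mulr0 !mul0r.
Qed.

Lemma cluster_part_orth k (y : 'cV[R]_N) :
  vdot (cluster_part k y) (degpow (blockW cl W k) p *m const_mx 1) = vdot y (chi cl W p k).
Proof.
rewrite [RHS]/vdot (bigID (fun i => cl i == k)) /= [X in _ + X]big1 ?addr0; last first.
  by move=> i /negPf clik; rewrite mxE clik mulr0.
rewrite big_cluster; apply: eq_bigr => a _.
by rewrite mul_diag_mx !mxE deg_blockW cl_blk eqxx mulr1.
Qed.

Lemma lapl_gap theta :
  (forall k (x : 'cV[R]_(Nk cl k)),
      vdot x (degpow (blockW cl W k) p *m const_mx 1) = 0 ->
      theta * vdot x x <= vdot x (lapl p (blockW cl W k) *m x)) ->
  forall y, (forall k, vdot y (chi cl W p k) = 0) -> theta * vdot y y <= vdot y (lapl p W *m y).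
Proof.
move=> gap y y_chi; rewrite vdot_clusters (vdot_clusters y) mulr_sumr.
apply: ler_sum => k _; rewrite cluster_part_lapl; apply: gap.
by rewrite cluster_part_orth.
Qed.

Lemma chi_orth k k' : k != k' -> vdot (chi cl W p k) (chi cl W p k') = 0.
Proof.
move=> kk'; rewrite /vdot big1 // => i _; rewrite !mxE.
have [clik|] := eqVneq (cl i) k; last by rewrite mul0r.
by rewrite clik (negPf kk') mulr0.
Qed.

Hypothesis deg_gt0 : forall i, 0 < deg W i.

Lemma lapl_chi k : lapl p W *m chi cl W p k = 0.
Proof.
have ind : degpow W (- p) *m chi cl W p k = \col_i (cl i == k)%:R.
  apply/colP => i; rewrite mul_diag_mx !mxE.
  by case: eqP => _; rewrite ?mulr0 // powRN mulVf // gt_eqF // powR_gt0.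
rewrite /lapl -!mulmxA ind mulmxBl.
suff -> : degmx W *m \col_i (cl i == k)%:R = W *m \col_i (cl i == k)%:R.
  by rewrite subrr mulmx0.
apply/colP => i; rewrite mul_diag_mx !mxE /deg mulr_suml; apply: eq_bigr => j _.
rewrite !mxE; have [->//|clij] := eqVneq (cl i) (cl j).
by rewrite W_off // !mul0r.
Qed.

Lemma chi_neq0 j : chi cl W p (cl j) != 0.
Proof.
apply/eqP => /colP/(_ j); rewrite !mxE eqxx => /eqP.
by rewrite gt_eqF // powR_gt0.
Qed.

Lemma chibar_unit j : vnorm2 (chibar cl W p (cl j)) = 1.
Proof. exact/vnorm2_normalize/chi_neq0. Qed.

Lemma residual_orth_chi j k :
  vdot (delta_residual (chibar cl W p (cl j)) j) (chi cl W p k) = 0.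
Proof.
set u := chibar cl W p (cl j); set s := Num.sqrt (vnorm2 (chi cl W p (cl j))).
have s_gt0 : 0 < s by rewrite sqrtr_gt0 vnorm2_gt0 // chi_neq0.
have [<-|kj] := eqVneq (cl j) k.
  have -> : chi cl W p (cl j) = s *: u by rewrite /u /chibar scalerA divff ?gt_eqF ?scale1r.
  by rewrite vdotZr vdot_delta_residual ?chibar_unit // mulr0.
rewrite vdotC vdotBr vdotZr [vdot _ (delta_mx _ _)]vdotC vdot_deltal /u /chibar.
by rewrite vdotZr chi_orth 1?eq_sym // !mulr0 subr0 mxE (negPf kj).
Qed.

End Clusters.

Theorem proposition2p9 (R : realType) (N K : nat) (p theta alpha : R)
    (cl : 'I_N -> 'I_K) (W : 'M[R]_N) :
  (2 <= N)%N -> (K < N)%N ->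
  (* clusters are consecutive, nonempty blocks *)
  (forall i j : 'I_N, (i <= j)%N -> (cl i <= cl j)%N) ->
  (forall k : 'I_K, exists i : 'I_N, cl i = k) ->
  (* W_0 symmetric, block diagonal, nonnegative, zero diagonal *)
  W^T = W ->
  (forall i j, i != j -> cl i = cl j -> 0 <= W i j) ->
  (forall i, W i i = 0) ->
  (forall i j, cl i != cl j -> W i j = 0) ->
  (* positive degrees (standing assumption) *)
  (forall i, 0 < deg W i) ->
  0 < alpha -> 0 < theta ->
  (* uniform spectral gap of each block Laplacian *)
  (forall (k : 'I_K) (x : 'cV[R]_(Nk cl k)),
      vdot x (degpow (blockW cl W k) p *m const_mx 1) = 0 ->
      theta * vdot x x <= vdot x (lapl p (blockW cl W k) *m x)) ->
  exists Xi : R, 0 < Xi /\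
  exists tau0 : R, 0 < tau0 /\
  forall tau : R, 0 < tau -> tau < tau0 ->
  forall (k : 'I_K) (j : 'I_N), cl j = k ->
    vnorm2 (col j (Ctau alpha tau (lapl p W)) - (chibar cl W p k j 0) *: chibar cl W p k)
      <= Xi * tau `^ (4 * alpha).
Proof.
move=> _ _ _ _ W_sym _ _ W_off deg_gt0 alpha_gt0 theta_gt0 block_gap.
have L_sym := lapl_sym p W_sym.
have L_chi := lapl_chi p W_off deg_gt0.
have gap := lapl_gap W_off block_gap.
exists ((theta `^ (- alpha)) ^+ 2); split; first by rewrite exprn_gt0 // powR_gt0.
exists 1; split => // tau tau_gt0 _ k j <-.
set C := Ctau alpha tau _; set u := chibar cl W p (cl j).
have Cu : C *m u = u by rewrite /u /chibar -scalemxAr (Ctau_mul_chi L_sym L_chi gap).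
have -> : col j C - u j 0 *: u = C *m delta_residual u j.
  by rewrite mulmxBr -scalemxAr Cu -colE.
apply: le_trans (vnorm2_Ctau_orth L_sym L_chi (chi_orth cl W p) theta_gt0 gap
  tau_gt0 alpha_gt0 (residual_orth_chi cl p deg_gt0 j)) _.
by rewrite ler_piMr ?mulr_ge0 ?sqr_ge0 ?powR_ge0 // vnorm2_delta_residual // (chibar_unit cl p deg_gt0).
Qed.
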